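(* Let $E\in M_n(\mathbb{FT})$ be an idempotent of rank $n$, let $A$ be in the $\mathcal H$-class of $E$ in $M_n(\mathbb{FT})$, and let $\phi_A:\mathbb{R}^n\to\mathbb{R}^n$ be $x\mapsto A\otimes x$. Regarding $C(E)$ as a subset of $\mathbb{R}^n$ with the usual topology: (i) $\phi_A$ maps interior points of $C(E)$ to interior points of $C(E)$; (ii) $\phi_A$ maps boundary points of $C(E)$ to boundary points of $C(E)$; (iii) $\phi_A$ maps every point not in $C(E)$ to a boundary point of $C(E)$. Dually, right multiplication $x\mapsto x\otimes A$ (for row vectors $x$) induces an $\mathbb{FT}$-module automorphism of $R(E)$ mapping interior points of $R(E)$ to interior points and boundary points to boundary points.
   Context: $\mathbb{FT}$ is $\mathbb{R}$ with $a\oplus b=\max(a,b)$, $a\otimes b=a+b$; $M_n(\mathbb{FT})$ is the semigroup of real $n\times n$ matrices under $(A\otimes B)_{i,j}=\max_k(A_{i,k}+B_{k,j})$, acting on column vectors by $(A\otimes x)_i=\max_k(A_{i,k}+x_k)$ and on row vectors by $(x\otimes A)_j=\max_k(x_k+A_{k,j})$. $C(E)$ (resp. $R(E)$) is the set of finite componentwise maxima of columns (resp. rows) of $E$ shifted by real constants; these are $\mathbb{FT}$-modules under componentwise max and adding constants. The rank of an idempotent $E$ is the minimal cardinality of a generating set of $C(E)$. Green's relations: $a\,\mathcal{R}\,b$ iff $aS^1=bS^1$, $a\,\mathcal{L}\,b$ iff $S^1a=S^1b$, $\mathcal{H}=\mathcal{L}\cap\mathcal{R}$. *)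

From HB Require Import structures.
From mathcomp Require Import all_boot all_order all_algebra.
From mathcomp Require Import all_classical all_reals topology normedtype.
Set Implicit Arguments. Unset Strict Implicit. Unset Printing Implicit Defensive.
Import Order.TTheory GRing.Theory Num.Theory.
Import numFieldNormedType.Exports.
Local Open Scope ring_scope.
Local Open Scope classical_set_scope.

Section Tropical.
Variable R : realType.

(* maximum of a finite family (0 on an empty index type, never used
   for a nonempty family) *)
Definition tsum k (f : 'I_k -> R) : R :=
  match [pick i : 'I_k] with
  | Some i0 => \big[Num.max/f i0]_(i < k) f i
  | None => 0
  end.

Definition tmx m k p (A : 'M[R]_(m, k)) (B : 'M[R]_(k, p)) : 'M[R]_(m, p) :=
  \matrix_(i, j) tsum (fun l => A i l + B l j).

Definition is_max_of (I : finType) (v : R) (J : {set I}) (f : I -> R) :=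
  (exists2 j, j \in J & v = f j) /\ (forall j, j \in J -> f j <= v).

Definition tspan m p k (g : 'I_k -> 'M[R]_(m, p)) : set 'M[R]_(m, p) :=
  [set x | exists (J : {set 'I_k}) (c : 'I_k -> R),
     forall i j, is_max_of (x i j) J (fun l => g l i j + c l)].

Definition colsp n (E : 'M[R]_n) : set 'cV[R]_n := tspan (fun j => col j E).
Definition rowsp n (E : 'M[R]_n) : set 'rV[R]_n := tspan (fun i => row i E).

Definition generates m p (M : set 'M[R]_(m, p)) (s : seq 'M[R]_(m, p)) :=
  tspan (fun l : 'I_(size s) => nth 0 s l) = M.

Definition has_rank_mod m p (M : set 'M[R]_(m, p)) (r : nat) :=
  (exists s, [/\ uniq s, size s = r & generates M s]) /\
  (forall s, uniq s -> generates M s -> (r <= size s)%N).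

Definition tidempotent n (E : 'M[R]_n) := tmx E E = E.

Definition has_rank n (E : 'M[R]_n) (r : nat) := has_rank_mod (colsp E) r.

(* principal one-sided ideals in S^1 for S = M_n(FT) *)
Definition rideal n (A : 'M[R]_n) : set 'M[R]_n :=
  [set B | B = A \/ exists X, B = tmx A X].
Definition lideal n (A : 'M[R]_n) : set 'M[R]_n :=
  [set B | B = A \/ exists X, B = tmx X A].

Definition Rrel n (A B : 'M[R]_n) := rideal A = rideal B.
Definition Lrel n (A B : 'M[R]_n) := lideal A = lideal B.
Definition Hrel n (A B : 'M[R]_n) := Rrel A B /\ Lrel A B.

Definition vmax m p (x y : 'M[R]_(m, p)) := map2_mx Num.max x y.
Definition vshift m p (c : R) (x : 'M[R]_(m, p)) := map_mx (fun a => a + c) x.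

End Tropical.

Definition tboundary (T : topologicalType) (A : set T) : set T :=
  closure A `\` interior A.

From HB Require Import structures.
From mathcomp Require Import all_boot all_order all_algebra all_fingroup.
From mathcomp Require Import all_classical all_reals topology normedtype.
From mathcomp Require Import lra.
Import Order.TTheory GRing.Theory Num.Theory.
Import numFieldNormedType.Exports.
Local Open Scope ring_scope.
Local Open Scope classical_set_scope.
Set Implicit Arguments.
Unset Strict Implicit.
Unset Printing Implicit Defensive.

(* Since [E] has full rank, no column of [E] is a tropical combination of the
   other ones; hence [E] has zero diagonal and [C(E)] is the closed polyhedron
   [{x | E_iv + x_v <= x_i}] (dually for [R(E)]).  An [A] in the H-class of [E]
   satisfies [A = E A = A E] and [E = A Y = Y' A], which forces
   [A_ik = E_i(s k) + lam_k] for a permutation [s], with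
   [E_(s a)(s b) = E_ab + lam_a - lam_b].  On [C(E)] the map [x |-> A x] is then
   the sup-norm isometry [x_i |-> x_(s^-1 i) + lam_(s^-1 i)] of [R^n], which
   preserves [C(E)] and hence its interior and boundary; rows are dual.  A point
   [x] outside [C(E)] has [A x = A (E x)], and [E x] is a boundary point: it is
   the least point of [C(E)] above [x], and it is strictly above [x] somewhere. *)

Section TropicalProduct.
Variable R : realType.

Lemma tsum_ub k (f : 'I_k -> R) i : f i <= tsum f.
Proof. by rewrite /tsum; case: pickP => [i0 _|/(_ i)//]; exact: le_bigmax. Qed.

Lemma tsum_exists k (f : 'I_k -> R) (i : 'I_k) : exists j, tsum f = f j.
Proof.
rewrite /tsum; case: pickP => [i0 _|/(_ i)//].
elim/big_ind: _ => [|x y [a ->] [b ->]|l _]; [by exists i0| |by exists l].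
by rewrite maxEle; case: ifP => _; [exists b|exists a].
Qed.

Arguments tsum_exists {k} f i.

Lemma tsum_le k (f : 'I_k -> R) (i : 'I_k) c :
  (forall l, f l <= c) -> tsum f <= c.
Proof. by move=> fc; have [j ->] := tsum_exists f i. Qed.

Lemma tsum_eq k (f : 'I_k -> R) c (i : 'I_k) :
  (forall l, f l <= c) -> c <= f i -> tsum f = c.
Proof.
move=> fc cf; apply/le_anti; rewrite (tsum_le i fc).
exact: le_trans cf (tsum_ub f i).
Qed.

Lemma tsum_max k (f g : 'I_k -> R) (i : 'I_k) :
  tsum (fun l => Num.max (f l) (g l)) = Num.max (tsum f) (tsum g).
Proof.
apply/le_anti/andP; split.
- apply: (tsum_le i) => l.
  by rewrite ge_max !le_max (tsum_ub f l) (tsum_ub g l) orbT.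
- by rewrite ge_max; apply/andP; split; apply: (tsum_le i) => l;
    apply: le_trans (tsum_ub _ l); rewrite le_max lexx ?orbT.
Qed.

Lemma tsum_shift k (f : 'I_k -> R) c (i : 'I_k) :
  tsum (fun l => f l + c) = tsum f + c.
Proof.
have [j fj] := tsum_exists f i.
by apply: (tsum_eq (i := j)) => [l|]; rewrite lerD2r -?fj ?tsum_ub.
Qed.

Lemma tmxE m k p (A : 'M[R]_(m, k)) (B : 'M[R]_(k, p)) i j :
  tmx A B i j = tsum (fun l => A i l + B l j).
Proof. by rewrite mxE. Qed.

Lemma le_tmx2l m k p (A : 'M[R]_(m, k)) (x y : 'M[R]_(k, p)) (k0 : 'I_k) i j :
  (forall l, x l j <= y l j) -> tmx A x i j <= tmx A y i j.
Proof.
move=> xy; rewrite !tmxE; apply: (tsum_le k0) => l.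
by apply: le_trans (tsum_ub _ l); rewrite lerD2l.
Qed.

Lemma tmxA m k l p (A : 'M[R]_(m, k)) (B : 'M[R]_(k, l)) (C : 'M[R]_(l, p))
    (k0 : 'I_k) (l0 : 'I_l) :
  tmx (tmx A B) C = tmx A (tmx B C).
Proof.
apply/matrixP => i j; rewrite !tmxE; apply/le_anti/andP; split.
- apply: (tsum_le l0) => r; rewrite tmxE.
  have [q ->] := tsum_exists (fun q => A i q + B q r) k0.
  apply: le_trans (tsum_ub _ q); rewrite /= tmxE -addrA lerD2l.
  exact: (tsum_ub (fun r' => B q r' + C r' j)).
- apply: (tsum_le k0) => q; rewrite tmxE.
  have [r ->] := tsum_exists (fun r => B q r + C r j) l0.
  apply: le_trans (tsum_ub _ r); rewrite /= tmxE addrA lerD2r.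
  exact: (tsum_ub (fun q' => A i q' + B q' r)).
Qed.

Lemma tmx_vmaxl m k p (x y : 'M[R]_(m, k)) (A : 'M[R]_(k, p)) (k0 : 'I_k) :
  tmx (vmax x y) A = vmax (tmx x A) (tmx y A).
Proof.
apply/matrixP => i j; rewrite [RHS]mxE !tmxE -(tsum_max _ _ k0).
by congr tsum; apply/funext => l; rewrite mxE addr_maxl.
Qed.

Lemma tmx_vshiftl m k p c (x : 'M[R]_(m, k)) (A : 'M[R]_(k, p)) (k0 : 'I_k) :
  tmx (vshift c x) A = vshift c (tmx x A).
Proof.
apply/matrixP => i j; rewrite [RHS]mxE !tmxE -(tsum_shift _ _ k0).
by congr tsum; apply/funext => l; rewrite mxE addrAC.
Qed.

(* [c' q] is the largest shift with [h q + c' q <= x] (tropical residuation);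
   the residuals of the generators [g l] occurring in [h] are at least [c l]. *)
Lemma tspan_sub m p k k' (g : 'I_k -> 'M[R]_(m, p)) (h : 'I_k' -> 'M[R]_(m, p))
    (J : {set 'I_k}) (c : 'I_k -> R) (x : 'M[R]_(m, p)) :
  (forall l, l \in J -> exists q, h q = g l) ->
  (forall i j, is_max_of (x i j) J (fun l => g l i j + c l)) -> tspan h x.
Proof.
move=> gh xJ.
pose r0 := \big[Num.max/0]_(l in J) c l.
pose c' q := \big[Num.min/r0]_(ij : 'I_m * 'I_p) (x ij.1 ij.2 - h q ij.1 ij.2).
have hc' q i j : h q i j + c' q <= x i j.
  by rewrite -lerBrDl (bigmin_le_cond _ (j := (i, j))).
exists [set: 'I_k']%SET, c' => i j; split => [|q _]; last exact: hc'.
have [[l lJ xl] _] := xJ i j; have [q hq] := gh l lJ.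
exists q => //; apply/le_anti; rewrite hc' xl -hq lerD2l andbT.
apply: le_bigmin => [|[a b] _]; first exact: le_bigmax_cond.
by rewrite /= lerBrDl hq; exact: (xJ a b).2.
Qed.

End TropicalProduct.

Section Idempotent.
Variables (R : realType) (m : nat).
Local Notation n := m.+1.
Variable E : 'M[R]_n.

Lemma tspan_fixl p k (g : 'I_k -> 'M[R]_(n, p)) x :
  (forall l, tmx E (g l) = g l) -> tspan g x -> tmx E x = x.
Proof.
move=> Eg [J [c xJ]]; apply/matrixP => i j; rewrite tmxE.
apply/le_anti/andP; split.
- apply: (tsum_le ord0) => q.
  have [[l lJ ->] _] := xJ q j; apply: le_trans ((xJ i j).2 l lJ).
  rewrite addrA lerD2r -{2}Eg tmxE; exact: tsum_ub.
- have [[l lJ ->] _] := xJ i j; rewrite -{1}Eg tmxE.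
  have [q ->] := tsum_exists (fun q => E i q + g l q j) ord0.
  apply: le_trans (tsum_ub _ q); rewrite -addrA lerD2l; exact: (xJ q j).2.
Qed.

Lemma tspan_fixr p k (g : 'I_k -> 'M[R]_(p, n)) x :
  (forall l, tmx (g l) E = g l) -> tspan g x -> tmx x E = x.
Proof.
move=> gE [J [c xJ]]; apply/matrixP => i j; rewrite tmxE.
apply/le_anti/andP; split.
- apply: (tsum_le ord0) => q.
  have [[l lJ ->] _] := xJ i q; apply: le_trans ((xJ i j).2 l lJ).
  rewrite addrAC lerD2r -{2}gE tmxE; exact: tsum_ub.
- have [[l lJ ->] _] := xJ i j; rewrite -{1}gE tmxE.
  have [q ->] := tsum_exists (fun q => g l i q + E q j) ord0.
  apply: le_trans (tsum_ub _ q); rewrite addrAC lerD2r; exact: (xJ i q).2.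
Qed.

Hypothesis hE : tidempotent E.

Lemma tidempotent_tri i k l : E i k + E k l <= E i l.
Proof. by have := tsum_ub (fun q => E i q + E q l) k; rewrite -tmxE hE. Qed.

Lemma tidempotent_diag_le0 i : E i i <= 0.
Proof. by rewrite -(lerD2l (E i i)) addr0 tidempotent_tri. Qed.

Lemma colsp_fixed x : colsp E x <-> tmx E x = x.
Proof.
split.
  apply: tspan_fixl => l; apply/matrixP => i j.
  by rewrite -[in RHS]hE !mxE; congr tsum; apply/funext => q; rewrite mxE.
move=> Ex; exists [set: 'I_n]%SET, (fun l => x l ord0) => i j; rewrite (ord1 j).
have xiE : x i ord0 = tsum (fun q => E i q + x q ord0) by rewrite -tmxE Ex.
split => [|l _]; rewrite xiE; last by rewrite mxE; exact: tsum_ub.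
have [l ->] := tsum_exists (fun q => E i q + x q ord0) ord0.
by exists l; rewrite ?mxE.
Qed.

Lemma rowsp_fixed x : rowsp E x <-> tmx x E = x.
Proof.
split.
  apply: tspan_fixr => l; apply/matrixP => i j.
  by rewrite -[in RHS]hE !mxE; congr tsum; apply/funext => q; rewrite mxE.
move=> xE; exists [set: 'I_n]%SET, (fun l => x ord0 l) => i j; rewrite (ord1 i).
have xjE : x ord0 j = tsum (fun q => x ord0 q + E q j) by rewrite -tmxE xE.
split => [|l _]; rewrite xjE; last by rewrite mxE addrC; exact: tsum_ub.
have [l ->] := tsum_exists (fun q => x ord0 q + E q j) ord0.
by exists l; rewrite ?mxE 1?addrC.
Qed.

Hypothesis diagE : forall i, E i i = 0.

Lemma colsp_ineq x : colsp E x <-> (forall i v, E i v + x v ord0 <= x i ord0).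
Proof.
rewrite colsp_fixed; split => [Ex i v|xle].
  by rewrite -{2}Ex tmxE; exact: (tsum_ub (fun q => E i q + x q ord0)).
apply/matrixP => i j; rewrite (ord1 j) tmxE.
by apply: (tsum_eq (i := i)) => //; rewrite diagE add0r.
Qed.

Lemma rowsp_ineq x : rowsp E x <-> (forall l j, x ord0 l + E l j <= x ord0 j).
Proof.
rewrite rowsp_fixed; split => [xE l j|xle].
  by rewrite -{2}xE tmxE; exact: (tsum_ub (fun q => x ord0 q + E q j)).
apply/matrixP => i j; rewrite (ord1 i) tmxE.
by apply: (tsum_eq (i := j)) => //; rewrite diagE addr0.
Qed.

End Idempotent.

Section FullRank.
Variables (R : realType) (m : nat).
Local Notation n := m.+1.
Variable E : 'M[R]_n.
Hypothesis hE : tidempotent E.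

Lemma colsp_drop_col j (J : {set 'I_n}) (c : 'I_n -> R) x :
    j \notin J -> (forall i, is_max_of (E i j) J (fun l => E i l + c l)) ->
  colsp E x -> exists d : 'I_n -> R,
    forall i k, is_max_of (x i k) [set~ j] (fun l => col l E i k + d l).
Proof.
move=> jJ colj /(colsp_fixed hE) Ex.
have xle i l : E i l + x l ord0 <= x i ord0.
  by rewrite -{2}Ex tmxE; exact: (tsum_ub (fun q => E i q + x q ord0)).
pose d l := if l \in J then Num.max (x l ord0) (c l + x j ord0) else x l ord0.
have dle i l : E i l + d l <= x i ord0.
  rewrite /d; case: ifP => lJ //; rewrite addr_maxr ge_max xle /=.
  by apply: le_trans (xle i j); rewrite addrA lerD2r; exact: (colj i).2.
have dge i : exists2 l, l != j & x i ord0 <= E i l + d l.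
  have [l xl] := tsum_exists (fun q => E i q + x q ord0) ord0.
  rewrite -tmxE Ex in xl.
  have [lj|/negPn/eqP lj] := boolP (l != j).
    by exists l; rewrite // xl lerD2l /d; case: ifP; rewrite ?le_max lexx.
  have [[l' l'J El'] _] := colj i.
  exists l'; first by apply: contraNneq jJ => <-.
  by rewrite xl lj El' -addrA lerD2l /d l'J le_max lexx orbT.
exists d => i k; rewrite (ord1 k); split => [|l _]; last by rewrite mxE dle.
have [l lj xl] := dge i.
by exists l; rewrite ?in_setC1 // mxE; apply/le_anti; rewrite xl dle.
Qed.

Hypothesis hr : forall s : seq 'cV[R]_n,
  uniq s -> generates (colsp E) s -> (n <= size s)%N.

Lemma col_independent j (J : {set 'I_n}) (c : 'I_n -> R) :
  j \notin J -> ~ (forall i, is_max_of (E i j) J (fun l => E i l + c l)).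
Proof.
move=> jJ colj.
pose s := undup [seq col l E | l <- enum [set~ j]%SET].
have in_s y : y \in s -> exists q : 'I_(size s), nth 0 s q = y.
  by move=> ys; exists (Ordinal (etrans (index_mem y s) ys)); rewrite nth_index.
have gen : generates (colsp E) s.
  apply/seteqP; split => x.
    move=> [J' [c' xJ']]; apply: tspan_sub xJ' => q _.
    have := mem_nth 0 (ltn_ord q).
    by rewrite mem_undup => /mapP [l _ ->]; exists l.
  move=> /(colsp_drop_col jJ colj) [d xd].
  apply: tspan_sub xd => l; rewrite -mem_enum => lj.
  by apply: in_s; rewrite mem_undup; apply/mapP; exists l.
have := hr (undup_uniq _) gen; apply/negP; rewrite -ltnNge.
by rewrite (leq_ltn_trans (size_undup _)) // size_map -cardE cardsC1 card_ord.
Qed.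

Lemma tidempotent_diag i : E i i = 0.
Proof.
apply/le_anti; rewrite tidempotent_diag_le0 //= leNgt; apply/negP => Eii.
apply: (@col_independent i [set~ i] (fun l => E l i)); first by rewrite !inE eqxx.
move=> r; split => [|l _]; last exact: tidempotent_tri.
have [l Erl] := tsum_exists (fun q => E r q + E q i) ord0.
rewrite -tmxE hE in Erl.
exists l => //; rewrite in_setC1; apply: contraTneq Eii => li.
by rewrite -(ltrD2l (E r i)) addr0 {2}Erl li ltxx.
Qed.

End FullRank.

Section Homeomorphism.
Variable T : topologicalType.

Lemma interior_homeo (K : set T) (f g : T -> T) :
    cancel f g -> cancel g f -> continuous g -> (forall x, K (f x) <-> K x) ->
  forall x, interior K x -> interior K (f x).
Proof.
move=> fK gK cg Kf x Kx.
have gKx : nbhs (f x) (g @^-1` K) by have := cg (f x) K; rewrite fK; exact.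
by apply: filterS gKx => y /=; rewrite -Kf gK.
Qed.

Lemma closure_stable (K : set T) (f : T -> T) :
    continuous f -> (forall x, K x -> K (f x)) ->
  forall x, closure K x -> closure K (f x).
Proof.
move=> cf Kf x Kx B /cf /Kx [z [Kz Bz]].
by exists (f z); split => //; exact: Kf.
Qed.

Lemma tboundary_homeo (K : set T) (f g : T -> T) :
    cancel f g -> cancel g f -> continuous f -> continuous g ->
    (forall x, K (f x) <-> K x) ->
  forall x, tboundary K x -> tboundary K (f x).
Proof.
move=> fK gK cf cg Kf x [Kx nKx]; split.
  by apply: closure_stable Kx => // y /Kf.
move=> Kfx; apply: nKx; rewrite -[x]fK.
by apply: (interior_homeo gK fK cf) => // y; rewrite -Kf gK.
Qed.

Lemma interior_tboundary_stable (K : set T) (phi f g : T -> T) :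
    closed K -> cancel f g -> cancel g f -> continuous f -> continuous g ->
    (forall x, K (f x) <-> K x) -> {in K, phi =1 f} ->
  (forall x, interior K x -> interior K (phi x)) /\
  (forall x, tboundary K x -> tboundary K (phi x)).
Proof.
move=> Kcl fK gK cf cg Kf phif; split => x Kx.
  rewrite phif ?inE; last exact: nbhs_singleton.
  exact: (interior_homeo fK gK cg Kf).
rewrite phif ?inE; last exact: Kcl Kx.1.
exact: (tboundary_homeo fK gK cf cg Kf).
Qed.

End Homeomorphism.

Lemma ball_continuous (R : numDomainType) (M N : pseudoMetricType R)
    (f : M -> N) :
  (forall x y e, ball x e y -> ball (f x) e (f y)) -> continuous f.
Proof.
move=> fb x; apply/cvg_ballP => e e0.
by apply: filterS (nbhsx_ballx x e e0) => y /fb.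
Qed.

Section MatrixBalls.
Variable R : realType.

Lemma ball_mxE p q (x y : 'M[R]_(p, q)) e :
  ball x e y <-> 0 < e /\ forall i j, `|x i j - y i j| < e.
Proof.
by split=> -[e0 xy]; split=> // i j; have := xy i j; rewrite -ball_normE.
Qed.

Lemma ball_reindex p q (a : 'I_p -> 'I_p) (b : 'I_q -> 'I_q)
    (c : 'I_p -> 'I_q -> R) (f : 'M[R]_(p, q) -> 'M[R]_(p, q)) :
    (forall x i j, f x i j = x (a i) (b j) + c i j) ->
  forall x y e, ball x e y -> ball (f x) e (f y).
Proof.
move=> fE x y e /ball_mxE [e0 xy]; apply/ball_mxE; split => // i j.
by rewrite !fE opprD addrACA subrr addr0.
Qed.

Lemma closed_entry_ineq p q (K : set 'M[R]_(p, q)) (I : Type)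
    (a b : I -> 'I_p * 'I_q) (w : I -> R) :
    (forall x, K x <-> forall k, x (a k).1 (a k).2 + w k <= x (b k).1 (b k).2) ->
  closed K.
Proof.
move=> KE x Kx; apply/KE => k; rewrite leNgt; apply/negP => hlt.
set e := (x (a k).1 (a k).2 + w k - x (b k).1 (b k).2) / 2.
have e0 : 0 < e by rewrite /e; lra.
have [z [Kz /ball_mxE [_ xz]]] := Kx _ (nbhsx_ballx x e e0).
have := (KE z).1 Kz k.
have := xz (a k).1 (a k).2; have := xz (b k).1 (b k).2.
rewrite !ltr_norml => /andP [h1 h2] /andP [h3 h4].
rewrite /e in h1 h2 h3 h4; lra.
Qed.

End MatrixBalls.

Section PermShift.
Variables (R : realType) (p q : nat) (s : {perm 'I_p}) (lam : 'I_p -> R).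

Definition colact (x : 'M[R]_(p, q)) : 'M[R]_(p, q) :=
  \matrix_(i, j) (x (s^-1 i) j + lam (s^-1 i))%g.
Definition rowact (x : 'M[R]_(q, p)) : 'M[R]_(q, p) :=
  \matrix_(i, j) (x i (s j) + lam j).

Lemma ball_colact x y e : ball x e y -> ball (colact x) e (colact y).
Proof. by apply: ball_reindex => z i j; rewrite mxE. Qed.

Lemma ball_rowact x y e : ball x e y -> ball (rowact x) e (rowact y).
Proof. by apply: ball_reindex => z i j; rewrite mxE. Qed.

End PermShift.

Section PermShiftInverse.
Variables (R : realType) (p q : nat) (s : {perm 'I_p}) (lam : 'I_p -> R).
Let lamV k := - lam (s^-1 k)%g.

Lemma colactK : cancel (@colact R p q s lam) (colact s^-1 lamV).
Proof.
by move=> x; apply/matrixP => i j; rewrite !mxE invgK permK /lamV permK addrK.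
Qed.

Lemma colactVK : cancel (colact s^-1 lamV) (@colact R p q s lam).
Proof.
by move=> x; apply/matrixP => i j; rewrite !mxE invgK permKV /lamV subrK.
Qed.

Lemma rowactK : cancel (@rowact R p q s lam) (rowact s^-1 lamV).
Proof. by move=> x; apply/matrixP => i j; rewrite !mxE permKV /lamV addrK. Qed.

Lemma rowactVK : cancel (rowact s^-1 lamV) (@rowact R p q s lam).
Proof. by move=> x; apply/matrixP => i j; rewrite !mxE /lamV permK subrK. Qed.

End PermShiftInverse.

Section ColspTopology.
Variables (R : realType) (m : nat).
Local Notation n := m.+1.
Variable E : 'M[R]_n.
Hypotheses (hE : tidempotent E) (diagE : forall i, E i i = 0).

Lemma colsp_closed : closed (colsp E).
Proof.
apply: (closed_entry_ineq (a := fun k : 'I_n * 'I_n => (k.2, ord0))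
  (b := fun k => (k.1, ord0)) (w := fun k => E k.1 k.2)) => x.
rewrite (colsp_ineq hE diagE); split => [xle [i v]|xle i v].
  by rewrite addrC; exact: xle.
by rewrite addrC; exact: (xle (i, v)).
Qed.

Lemma rowsp_closed : closed (rowsp E).
Proof.
apply: (closed_entry_ineq (a := fun k : 'I_n * 'I_n => (ord0, k.1))
  (b := fun k => (ord0, k.2)) (w := fun k => E k.1 k.2)) => x.
rewrite (rowsp_ineq hE diagE); split => [xle [l j]|xle l j]; first exact: xle.
exact: (xle (l, j)).
Qed.

(* Lowering the coordinate where [E x] exceeds [x] leaves [C(E)], because
   every point of [C(E)] above [x] is above [E x]. *)
Lemma tboundary_colsp_proj x : ~ colsp E x -> tboundary (colsp E) (tmx E x).
Proof.
move=> Kx; set y := tmx E x.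
have Ky : colsp E y by apply/(colsp_fixed hE); rewrite -(tmxA _ _ _ ord0 ord0) hE.
have xy i : x i ord0 <= y i ord0.
  by rewrite /y tmxE; apply: le_trans (tsum_ub _ i); rewrite diagE add0r.
have [i xyi] : exists i, x i ord0 < y i ord0.
  apply: contra_notP Kx => xy_eq; apply/(colsp_fixed hE)/matrixP => i j.
  rewrite (ord1 j); apply/le_anti; rewrite xy andbT leNgt.
  by apply/negP => ?; apply: xy_eq; exists i.
split; first exact: subset_closure.
move=> /nbhs_ballP [e /= e0 yeK].
pose d := Num.min (e / 2) (y i ord0 - x i ord0).
have d0 : 0 < d by rewrite lt_min; apply/andP; split; lra.
have de : d <= e / 2 by rewrite ge_min lexx.
have dxy : d <= y i ord0 - x i ord0 by rewrite ge_min lexx orbT.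
pose z : 'cV[R]_n := \matrix_(k, l) (if k == i then y k l - d else y k l).
have /(colsp_fixed hE)/matrixP/(_ i ord0) zE : colsp E z.
  apply: yeK; apply/ball_mxE; split => // k l; rewrite [z _ _]mxE.
  by case: ifP => _; rewrite ?subrr ?normr0 // opprB addrC subrK ger0_norm; lra.
have xz k : x k ord0 <= z k ord0.
  by rewrite [z _ _]mxE; case: ifP => [/eqP ->|_]; [lra|exact: xy].
have := le_tmx2l E ord0 i xz.
by rewrite -/y zE [z _ _]mxE eqxx; lra.
Qed.

End ColspTopology.

Lemma Hrel_factor (R : realType) (m : nat) (E A : 'M[R]_m.+1) :
    tidempotent E -> Hrel A E ->
  [/\ tmx E A = A, tmx A E = A, exists Y, E = tmx A Y & exists Y', E = tmx Y' A].
Proof.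
move=> hE [RAE LAE]; split.
- have : rideal E A by rewrite -RAE; left.
  by case=> [->|[X ->]]; rewrite // -(tmxA _ _ _ ord0 ord0) hE.
- have : lideal E A by rewrite -LAE; left.
  by case=> [->|[X ->]]; rewrite // (tmxA _ _ _ ord0 ord0) hE.
- have : rideal A E by rewrite RAE; left.
  by case=> [EA|[Y ->]]; [exists E; rewrite -EA hE|exists Y].
- have : lideal A E by rewrite LAE; left.
  by case=> [EA|[Y ->]]; [exists E; rewrite -EA hE|exists Y].
Qed.

Section HClass.
Variables (R : realType) (m : nat).
Local Notation n := m.+1.
Variables E A Y Y' : 'M[R]_n.
Hypotheses (hE : tidempotent E)
  (hr : forall s : seq 'cV[R]_n,
     uniq s -> generates (colsp E) s -> (n <= size s)%N).
Hypotheses (EA : tmx E A = A) (AE : tmx A E = A).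
Hypotheses (EAY : E = tmx A Y) (EYA : E = tmx Y' A).
Let diagE := tidempotent_diag hE hr.

Lemma col_translate j : exists k, forall i, E i j = A i k + Y k j.
Proof.
have [k Ejj] := tsum_exists (fun q => A j q + Y q j) ord0.
rewrite -tmxE -EAY diagE in Ejj.
exists k => i; apply/le_anti/andP; split.
- have : E i j + A j k <= A i k.
    by rewrite -{2}EA tmxE; exact: (tsum_ub (fun q => E i q + A q k)).
  lra.
- by rewrite EAY tmxE; exact: (tsum_ub (fun q => A i q + Y q j)).
Qed.

(* Column [j] of [E] is a translate of column [rho j] of [A], and [rho] is
   injective because no column of [E] is a translate of another one. *)
Lemma perm_shift_form : exists (s : {perm 'I_n}) (lam : 'I_n -> R),
  forall i k, A i k = E i (s k) + lam k.
Proof.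
have [rho Erho] := fin_all_exists col_translate.
have rho_inj : injective rho.
  move=> j j' rhoj; have [//|jj'] := eqVneq j j'; exfalso.
  pose c (_ : 'I_n) := Y (rho j) j - Y (rho j) j'.
  apply: (@col_independent _ _ _ hE hr j [set j']%SET c).
    by rewrite inE.
  by move=> i; split => [|l /set1P ->]; [exists j'; rewrite ?inE //|];
    rewrite /c /= (Erho j) (Erho j') rhoj; lra.
exists (perm rho_inj)^-1%g, (fun k => - Y k ((perm rho_inj)^-1%g k)) => i k.
have := Erho ((perm rho_inj)^-1%g k) i.
rewrite -[in rho _](permE rho_inj) permKV; lra.
Qed.

Section NormalForm.
Variables (s : {perm 'I_n}) (lam : 'I_n -> R).
Hypothesis AE_perm : forall i k, A i k = E i (s k) + lam k.

Lemma tidempotent_perm_conj a b : E (s a) (s b) = E a b + lam a - lam b.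
Proof.
apply/le_anti/andP; split.
- have [k Eaa] := tsum_exists (fun q => Y' a q + A q a) ord0.
  rewrite -tmxE -EYA diagE AE_perm in Eaa.
  have : Y' a k + A k b <= E a b.
    by rewrite EYA tmxE; exact: (tsum_ub (fun q => Y' a q + A q b)).
  have := tidempotent_tri hE k (s a) (s b).
  rewrite AE_perm; lra.
- have : A (s a) a + E a b <= A (s a) b.
    by rewrite -{2}AE tmxE; exact: (tsum_ub (fun q => A (s a) q + E q b)).
  rewrite !AE_perm diagE; lra.
Qed.

Lemma tmx_colsp x : colsp E x -> tmx A x = colact s lam x.
Proof.
move/(colsp_ineq hE diagE) => xle.
apply/matrixP => i j; rewrite (ord1 j) tmxE !mxE.
apply: (tsum_eq (i := (s^-1)%g i)) => [k|].
  rewrite AE_perm -{1}(permKV s i) tidempotent_perm_conj.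
  by have := xle ((s^-1)%g i) k; lra.
by rewrite AE_perm permKV diagE add0r addrC.
Qed.

Lemma tmx_rowsp x : rowsp E x -> tmx x A = rowact s lam x.
Proof.
move/(rowsp_ineq hE diagE) => xle.
apply/matrixP => i j; rewrite (ord1 i) tmxE !mxE.
apply: (tsum_eq (i := s j)) => [k|]; last by rewrite AE_perm diagE add0r.
by rewrite AE_perm; have := xle k (s j); lra.
Qed.

Lemma colsp_colact x : colsp E (colact s lam x) <-> colsp E x.
Proof.
rewrite !(colsp_ineq hE diagE); split => xle a b.
  by have := xle (s a) (s b); rewrite !mxE !permK tidempotent_perm_conj; lra.
rewrite -(permKV s a) -(permKV s b) !mxE !permK tidempotent_perm_conj.
by have := xle ((s^-1)%g a) ((s^-1)%g b); lra.
Qed.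

Lemma rowsp_rowact x : rowsp E (rowact s lam x) <-> rowsp E x.
Proof.
rewrite !(rowsp_ineq hE diagE); split => xle a b.
  rewrite -(permKV s a) -(permKV s b).
  have := xle ((s^-1)%g a) ((s^-1)%g b).
  by rewrite !mxE tidempotent_perm_conj; lra.
by rewrite !mxE; have := xle (s a) (s b); rewrite tidempotent_perm_conj; lra.
Qed.

End NormalForm.

Lemma colsp_tmx_stable :
  (forall x, interior (colsp E) x -> interior (colsp E) (tmx A x)) /\
  (forall x, tboundary (colsp E) x -> tboundary (colsp E) (tmx A x)).
Proof.
have [s [lam AE_perm]] := perm_shift_form.
apply: (interior_tboundary_stable (colsp_closed hE diagE)
  (colactK s lam) (colactVK s lam)).
- exact/ball_continuous/ball_colact.
- exact/ball_continuous/ball_colact.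
- exact: (colsp_colact AE_perm).
- by move=> x; rewrite inE => /(tmx_colsp AE_perm).
Qed.

Lemma rowsp_tmx_stable :
  (forall x, interior (rowsp E) x -> interior (rowsp E) (tmx x A)) /\
  (forall x, tboundary (rowsp E) x -> tboundary (rowsp E) (tmx x A)).
Proof.
have [s [lam AE_perm]] := perm_shift_form.
apply: (interior_tboundary_stable (rowsp_closed hE diagE)
  (rowactK s lam) (rowactVK s lam)).
- exact/ball_continuous/ball_rowact.
- exact/ball_continuous/ball_rowact.
- exact: (rowsp_rowact AE_perm).
- by move=> x; rewrite inE => /(tmx_rowsp AE_perm).
Qed.

Lemma tboundary_colsp_tmx_out x :
  ~ colsp E x -> tboundary (colsp E) (tmx A x).
Proof.
move=> Kx; rewrite -AE (tmxA _ _ _ ord0 ord0).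
exact/colsp_tmx_stable.2/(tboundary_colsp_proj hE diagE).
Qed.

Lemma rowsp_tmx x : rowsp E (tmx x A).
Proof. by apply/(rowsp_fixed hE); rewrite (tmxA _ _ _ ord0 ord0) AE. Qed.

Lemma rowsp_tmx_inj : {in rowsp E &, injective (fun x => tmx x A)}.
Proof.
move=> x y; rewrite !inE => /(rowsp_fixed hE) xE /(rowsp_fixed hE) yE /= xyA.
by rewrite -xE -yE EAY -!(tmxA _ _ _ ord0 ord0) xyA.
Qed.

Lemma rowsp_tmx_surj y : rowsp E y -> exists2 x, rowsp E x & tmx x A = y.
Proof.
move=> /(rowsp_fixed hE) yE; exists (tmx (tmx y Y') E).
  by apply/(rowsp_fixed hE); rewrite (tmxA _ _ _ ord0 ord0) hE.
by rewrite (tmxA _ _ _ ord0 ord0) EA (tmxA _ _ _ ord0 ord0) -EYA yE.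
Qed.

End HClass.

Theorem lemma7p2 (R : realType) (n : nat) (E A : 'M[R]_n) :
  tidempotent E -> has_rank E n -> Hrel A E ->
  (* column action phi_A : x |-> A (x) x on C(E) *)
  [/\ (forall x : 'cV[R]_n, interior (colsp E) x -> interior (colsp E) (tmx A x)),
      (forall x : 'cV[R]_n, tboundary (colsp E) x -> tboundary (colsp E) (tmx A x))
    & (forall x : 'cV[R]_n, ~ colsp E x -> tboundary (colsp E) (tmx A x))] /\
  (* row action x |-> x (x) A on R(E) *)
  [/\ (forall x : 'rV[R]_n, rowsp E x -> rowsp E (tmx x A)),
      {in rowsp E &, injective (fun x : 'rV[R]_n => tmx x A)},
      (forall y : 'rV[R]_n, rowsp E y -> exists2 x, rowsp E x & tmx x A = y),
      (forall x y : 'rV[R]_n, rowsp E x -> rowsp E y ->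
          tmx (vmax x y) A = vmax (tmx x A) (tmx y A))
    & (forall (c : R) (x : 'rV[R]_n), rowsp E x ->
          tmx (vshift c x) A = vshift c (tmx x A))] /\
  [/\ (forall x : 'rV[R]_n, interior (rowsp E) x -> interior (rowsp E) (tmx x A))
    & (forall x : 'rV[R]_n, tboundary (rowsp E) x -> tboundary (rowsp E) (tmx x A))].
Proof.
case: n E A => [|m] E A hE [_ hr] HAE.
  have rV0 (x y : 'rV[R]_0) : x = y by apply/matrixP => ? [].
  have -> : colsp E = setT.
    by apply/seteqP; split => // x _; exists [set: 'I_0]%SET, (fun=> 0) => -[].
  have -> : rowsp E = setT.
    by apply/seteqP; split => // x _; exists [set: 'I_0]%SET, (fun=> 0) => ? [].
  rewrite /tboundary !interiorT !closureT !setDv.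
  split; [split|split; [split|split]] => //; first by move=> x /(_ I).
  by move=> y _; exists y => //; exact: rV0.
have [EA AE [Y EAY] [Y' EYA]] := Hrel_factor hE HAE.
have [colI colB] := colsp_tmx_stable hE hr EA AE EAY EYA.
have [rowI rowB] := rowsp_tmx_stable hE hr EA AE EAY EYA.
split; [split|split; [split|split]] => //.
- exact: (tboundary_colsp_tmx_out hE hr EA AE EAY EYA).
- by move=> x _; exact: rowsp_tmx.
- exact: (rowsp_tmx_inj hE EAY).
- exact: (rowsp_tmx_surj hE EA EYA).
- by move=> x y _ _; exact: tmx_vmaxl ord0.
- by move=> c x _; exact: tmx_vshiftl ord0.
Qed.
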